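(* Let $\mathcal{C}$ be the set of all finite fields $\mathbb{F}_p$ with $p$ prime, viewed as structures in the language $\{0,1,+\}$. For every non-empty finite subset $\mathcal{C}_0\subseteq\mathcal{C}$ there is a positive existential $\{0,1,+\}$-formula $\varphi(x)$ such that for every $\mathbb{F}_p\in\mathcal{C}_0$ and $x\in\mathbb{F}_p$, $\mathbb{F}_p\models\varphi(x)$ iff $x$ is a square in $\mathbb{F}_p$. However, for no infinite subset $\mathcal{C}_1\subseteq \mathcal{C}$ is there a positive existential $\{0,1,+\}$-formula defining ''$x$ is a square'' simultaneously in all $\mathbb{F}_p\in\mathcal{C}_1$. In particular, there is no positive existential $\{0,1,+\}$-formula $\mu(x,y,w)$ defining the relation $w=xy$ simultaneously in all $\mathbb{F}_p\in\mathcal{C}$. *)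

From HB Require Import structures.
From mathcomp Require Import all_boot all_algebra.
Set Implicit Arguments. Unset Strict Implicit. Unset Printing Implicit Defensive.
Import GRing.Theory.
Local Open Scope ring_scope.

(* Terms of the language {0, 1, +}; variables are de Bruijn indices. *)
Inductive term : Type :=
| TVar of nat
| TZero
| TOne
| TAdd of term & term.

Inductive pef : Type :=
| PEq of term & term
| PAnd of pef & pef
| POr of pef & pef
| PEx of pef.

Definition scons (R : Type) (a : R) (e : nat -> R) : nat -> R :=
  fun n => match n with O => a | S k => e k end.

Fixpoint teval (R : nzRingType) (e : nat -> R) (t : term) : R :=
  match t with
  | TVar n => e n
  | TZero => 0
  | TOne => 1
  | TAdd t1 t2 => teval e t1 + teval e t2
  end.

(* Satisfaction; PEx binds variable 0 and shifts the others. *)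
Fixpoint sat (R : nzRingType) (e : nat -> R) (f : pef) : Prop :=
  match f with
  | PEq t1 t2 => teval e t1 = teval e t2
  | PAnd f1 f2 => sat e f1 /\ sat e f2
  | POr f1 f2 => sat e f1 \/ sat e f2
  | PEx f1 => exists a : R, sat (scons a e) f1
  end.

Definition is_square (R : nzRingType) (x : R) : Prop := exists y : R, x = y * y.

Definition defines_square (R : nzRingType) (phi : pef) : Prop :=
  forall e : nat -> R, sat e phi <-> is_square (e 0%N).

Definition defines_mul (R : nzRingType) (mu : pef) : Prop :=
  forall e : nat -> R, sat e mu <-> e 2%N = e 0%N * e 1%N.

From mathcomp Require Import all_boot all_algebra.
From mathcomp Require Import zify.
From Stdlib Require Import FunctionalExtensionality.

(* The environments satisfying a positive existential {0,1,+}-formula form a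
   union of at most w sets closed under a - b + c, with w depending only on
   the formula.  In F_p such a set containing two distinct constant
   environments contains all constant environments.  If p > 2w, two of the
   w + 1 distinct squares 0, 1, 4, ..., w^2 land in the same piece, so a
   formula defining the squares would make every element of F_p a square,
   which fails for p > 2.  A formula mu defining multiplication yields the
   formula [exists y, mu(y, y, x)] defining the squares. *)

Set Implicit Arguments. Unset Strict Implicit. Unset Printing Implicit Defensive.
Import GRing.Theory.
Local Open Scope ring_scope.

Section AffineDecomposition.
Variable R : nzRingType.

Definition affine_closed (A : (nat -> R) -> Prop) :=
  forall a b c, A a -> A b -> A c -> A (fun n => a n - b n + c n).

Definition affine_union (n : nat) (S : (nat -> R) -> Prop) :=
  exists A : nat -> (nat -> R) -> Prop, (forall i, affine_closed (A i)) /\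
    forall e, S e <-> exists2 i, (i < n)%N & A i e.

Lemma teval_affine (a b c : nat -> R) t :
  teval (fun n => a n - b n + c n) t = teval a t - teval b t + teval c t.
Proof.
elim: t => //= [|| t1 -> t2 ->]; first by rewrite subr0 addr0.
  by rewrite subrr add0r.
by rewrite opprD addrACA (addrACA (teval a t1)).
Qed.

Lemma affine_union_eq t1 t2 :
  affine_union 1 (fun e => teval e t1 = teval e t2).
Proof.
exists (fun _ e => teval e t1 = teval e t2); split.
  by move=> _ a b c Ha Hb Hc; rewrite !teval_affine Ha Hb Hc.
by move=> e; split=> [|[]]; first exists 0%N.
Qed.

Lemma affine_union_and n1 n2 S1 S2 :
  affine_union n1 S1 -> affine_union n2 S2 ->
  affine_union (n1 * n2) (fun e => S1 e /\ S2 e).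
Proof.
move=> [A1 [A1aff S1E]] [A2 [A2aff S2E]].
exists (fun i e => A1 (i %/ n2)%N e /\ A2 (i %% n2)%N e); split.
  by move=> i a b c [? ?] [? ?] [? ?]; split; [apply: A1aff | apply: A2aff].
move=> e; rewrite S1E S2E; split.
  move=> [[i1 lt_i1 A1e] [i2 lt_i2 A2e]]; exists (i1 * n2 + i2)%N; first nia.
  by rewrite divnMDl ?modnMDl ?divn_small ?modn_small ?addn0 //; lia.
move=> [i lt_i [A1e A2e]]; have /andP[_ n2_gt0] : (0 < n1)%N && (0 < n2)%N.
  by rewrite -muln_gt0 (leq_ltn_trans _ lt_i).
by split; [exists (i %/ n2)%N; rewrite ?ltn_divLR | exists (i %% n2)%N; rewrite ?ltn_pmod].
Qed.

Lemma affine_union_or n1 n2 S1 S2 :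
  affine_union n1 S1 -> affine_union n2 S2 ->
  affine_union (n1 + n2) (fun e => S1 e \/ S2 e).
Proof.
move=> [A1 [A1aff S1E]] [A2 [A2aff S2E]].
exists (fun i e => if (i < n1)%N then A1 i e else A2 (i - n1)%N e); split.
  by move=> i a b c; case: ifP => _; [apply: A1aff | apply: A2aff].
move=> e; rewrite S1E S2E; split.
  case=> [[i lt_i A1e] | [i lt_i A2e]].
    by exists i; [lia | rewrite lt_i].
  by exists (n1 + i)%N; [lia | rewrite ltnNge leq_addr addKn].
move=> [i lt_i]; case: ifP => lt_i1 Ae; first by left; exists i.
by right; exists (i - n1)%N => //; lia.
Qed.

Lemma affine_union_ex n S :
  affine_union n S -> affine_union n (fun e => exists x, S (scons x e)).
Proof.
move=> [A [Aaff SE]].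
exists (fun i e => exists x, A i (scons x e)); split.
  move=> i a b c [x Ha] [y Hb] [z Hc]; exists (x - y + z).
  have -> : scons (x - y + z) (fun n => a n - b n + c n) =
      (fun n => scons x a n - scons y b n + scons z c n).
    by apply: functional_extensionality; case.
  exact: Aaff.
move=> e; split=> [[x /SE [i lt_i Ae]] | [i lt_i [x Ae]]]; first by exists i => //; exists x.
by exists x; apply/SE; exists i.
Qed.

End AffineDecomposition.

Fixpoint pef_width (f : pef) : nat :=
  match f with
  | PEq _ _ => 1
  | PAnd f1 f2 => pef_width f1 * pef_width f2
  | POr f1 f2 => pef_width f1 + pef_width f2
  | PEx f1 => pef_width f1
  end%N.

Lemma sat_affine_union (R : nzRingType) (f : pef) :
  affine_union (pef_width f) (fun e : nat -> R => sat e f).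
Proof.
elim: f => /= [t1 t2 | f1 IH1 f2 IH2 | f1 IH1 f2 IH2 | f IH].
- exact: affine_union_eq.
- exact: affine_union_and IH1 IH2.
- exact: affine_union_or IH1 IH2.
- exact: affine_union_ex IH.
Qed.

Lemma affine_closed_line (R : nzRingType) (A : (nat -> R) -> Prop) a b :
  affine_closed A -> A a -> A b ->
  forall m : nat, A (fun n => a n + m%:R * (b n - a n)).
Proof.
move=> Aaff Aa Ab; elim=> [|m IH].
  rewrite (_ : (fun n => _) = a) //.
  by apply: functional_extensionality => n; rewrite mul0r addr0.
have -> : (fun n => a n + m.+1%:R * (b n - a n)) =
    (fun n => (a n + m%:R * (b n - a n)) - a n + b n).
  by apply: functional_extensionality => n; rewrite mulrSr mulrDl mul1r !addrA [RHS]addrAC.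
exact: Aaff.
Qed.

Lemma affine_closed_Fp_const p (A : (nat -> 'F_p) -> Prop) (x y : 'F_p) :
  affine_closed A -> x != y ->
  A (fun _ => x) -> A (fun _ => y) -> forall z, A (fun _ => z).
Proof.
move=> Aaff neq_xy Ax Ay z.
have yx_neq0 : y - x != 0 by rewrite subr_eq0 eq_sym.
have := affine_closed_line Aaff Ax Ay (nat_of_ord ((z - x) / (y - x))).
by rewrite natr_Zp divfK // addrC subrK.
Qed.

Lemma pigeonhole (n : nat) (P : nat -> nat -> Prop) :
  (forall k, (k <= n)%N -> exists2 i, (i < n)%N & P k i) ->
  exists k1 k2 i, [/\ (i < n)%N, (k1 < k2 <= n)%N, P k1 i & P k2 i].
Proof.
move=> cover.
have /fin_all_exists [f Pf] : forall k : 'I_n.+1, exists i : 'I_n, P k i.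
  by move=> k; have [i lt_in Pki] := cover k (ltn_ord k); exists (Ordinal lt_in).
have /injectivePn [k1 [k2 neq_k eq_f]] : ~~ injectiveb f.
  by apply/injectiveP => /leq_card; rewrite !card_ord ltnn.
have le_n (k : 'I_n.+1) : (k <= n)%N := ltn_ord k.
case: (ltngtP k1 k2) neq_k => [lt_k12 _ | lt_k21 _ | /val_inj ->]; last by rewrite eqxx.
  exists (nat_of_ord k1), (nat_of_ord k2), (f k1).
  by split; [exact: ltn_ord | rewrite lt_k12 le_n | exact: Pf | rewrite eq_f].
exists (nat_of_ord k2), (nat_of_ord k1), (f k1).
by split; [exact: ltn_ord | rewrite lt_k21 le_n | rewrite eq_f | exact: Pf].
Qed.

Lemma Fp_two_neq0 p : prime p -> (2 < p)%N -> 2%:R != 0 :> 'F_p.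
Proof.
move=> p_pr lt_2p; rewrite -(dvdn_pcharf (pchar_Fp p_pr)).
by apply/negP => /(@dvdn_leq _ 2 erefl); rewrite leqNgt lt_2p.
Qed.

Lemma finField_not_all_square (F : finFieldType) :
  2%:R != 0 :> F -> ~ forall z : F, is_square z.
Proof.
move=> two_neq0 all_sq; pose sq (z : F) := z * z.
have [sqrt sqrtK] : exists sqrt : F -> F, cancel sqrt sq.
  by have /fin_all_exists[sqrt sqrtK] := all_sq; exists sqrt => z; rewrite /sq -sqrtK.
have sq_inj : injective sq.
  by apply/can_inj/(bij_can_sym (injF_bij (can_inj sqrtK))).
have /sq_inj/eqP : sq 1 = sq (-1) by rewrite /sq mulrNN.
by rewrite -subr_eq0 opprK -mulr2n; apply/negP.
Qed.

Lemma Fp_nat_sqr_eq p k1 k2 : prime p -> (k1 + k2 < p)%N ->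
  ((k1 * k1)%:R == (k2 * k2)%:R :> 'F_p) = (k1 == k2).
Proof.
move=> p_pr lt_k12p; apply/idP/eqP => [|-> //].
rewrite !natrM -!expr2 eqf_sqr => /orP[/eqP | /eqP eq_k12].
  by move/(congr1 val); rewrite /= !val_Fp_nat // !modn_small //; lia.
have : (k1 + k2)%:R = 0 :> 'F_p by rewrite natrD eq_k12 addNr.
by move/(congr1 val); rewrite /= val_Fp_nat // modn_small //; lia.
Qed.

Lemma Fp_square_not_definable p (phi : pef) :
  prime p -> (2 * pef_width phi < p)%N -> ~ defines_square 'F_p phi.
Proof.
move=> p_pr lt_wp def_sq.
have [A [Aaff satE]] := sat_affine_union 'F_p phi.
have cover k : (k <= pef_width phi)%N ->
    exists2 i, (i < pef_width phi)%N & A i (fun _ => (k * k)%:R).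
  by move=> _; apply/satE/def_sq; exists k%:R; rewrite natrM.
have [k1 [k2 [i [lt_i /andP[lt_k12 le_k2] A1 A2]]]] := pigeonhole cover.
have lt_k12p : (k1 + k2 < p)%N by lia.
apply: (finField_not_all_square (Fp_two_neq0 p_pr _)); first lia.
move=> z; apply/(def_sq (fun _ => z))/satE; exists i => //.
apply: affine_closed_Fp_const A1 A2 z => //.
by rewrite Fp_nat_sqr_eq // ltn_eqF.
Qed.

Fixpoint tnat (n : nat) : term :=
  match n with O => TZero | S k => TAdd (tnat k) TOne end.

Lemma teval_tnat (R : nzRingType) (e : nat -> R) n : teval e (tnat n) = n%:R.
Proof. by elim: n => //= n ->; rewrite -mulrSr. Qed.

Definition pbigor (fs : seq pef) : pef := foldr POr (PEq TOne TZero) fs.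

Lemma sat_pbigor (R : nzRingType) (e : nat -> R) (g : nat -> pef) (s : seq nat) :
  sat e (pbigor [seq g x | x <- s]) <-> exists2 x, x \in s & sat e (g x).
Proof.
elim: s => [|y s IH] /=.
  by split=> [/eqP | [x]]; rewrite ?oner_eq0.
rewrite IH; split=> [[gy | [x s_x gx]] | [x]].
- by exists y; rewrite ?mem_head.
- by exists x; rewrite // in_cons s_x orbT.
by rewrite in_cons => /orP[/eqP -> | s_x gx]; [left | right; exists x].
Qed.

(* The conjunct [q = 0] singles out F_q among the fields of C0, and the
   squares of F_q are the numerals k * k with k < q. *)
Definition square_formula (C0 : seq nat) : pef :=
  pbigor [seq PAnd (PEq (tnat q) TZero)
                   (pbigor [seq PEq (TVar 0) (tnat (k * k)) | k <- iota 0 q])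
         | q <- C0].

Lemma square_formula_defines (C0 : seq nat) p :
  all prime C0 -> p \in C0 -> defines_square 'F_p (square_formula C0).
Proof.
move=> /allP C0_pr C0_p e; have p_pr := C0_pr p C0_p.
rewrite sat_pbigor; split.
  move=> [q _ /= [_]]; rewrite sat_pbigor => -[k _ /=].
  by rewrite teval_tnat natrM => ->; exists k%:R.
move=> [y sq_y]; exists p => //=; split; first by rewrite teval_tnat pchar_Fp_0.
rewrite sat_pbigor; exists (nat_of_ord y).
  by rewrite mem_iota add0n -[X in (_ < X)%N](Fp_cast p_pr) ltn_ord.
by rewrite /= teval_tnat natrM natr_Zp sq_y.
Qed.

Fixpoint trename (r : nat -> nat) (t : term) : term :=
  match t with
  | TVar n => TVar (r n)
  | TZero => TZero
  | TOne => TOne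
  | TAdd t1 t2 => TAdd (trename r t1) (trename r t2)
  end.

Definition uprename (r : nat -> nat) (n : nat) : nat :=
  if n is k.+1 then (r k).+1 else 0%N.

Fixpoint rename (r : nat -> nat) (f : pef) : pef :=
  match f with
  | PEq t1 t2 => PEq (trename r t1) (trename r t2)
  | PAnd f1 f2 => PAnd (rename r f1) (rename r f2)
  | POr f1 f2 => POr (rename r f1) (rename r f2)
  | PEx f1 => PEx (rename (uprename r) f1)
  end.

Lemma teval_rename (R : nzRingType) (e : nat -> R) r t :
  teval e (trename r t) = teval (e \o r) t.
Proof. by elim: t => //= t1 -> t2 ->. Qed.

Lemma sat_rename (R : nzRingType) (f : pef) r (e : nat -> R) :
  sat e (rename r f) <-> sat (e \o r) f.
Proof.
elim: f r e => /= [t1 t2 | f1 IH1 f2 IH2 | f1 IH1 f2 IH2 | f IH] r e.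
- by rewrite !teval_rename.
- by rewrite IH1 IH2.
- by rewrite IH1 IH2.
have scons_up a : scons a e \o uprename r = scons a (e \o r).
  by apply: functional_extensionality; case.
by split=> -[a sat_a]; exists a; move: sat_a; rewrite IH scons_up.
Qed.

(* [exists y, mu(y, y, x)]: under the binder, variables 0 and 1 of mu become
   the bound y and variable 2 becomes x. *)
Definition square_of_mul (mu : pef) : pef :=
  PEx (rename (fun n => if n == 2%N then 1%N else 0%N) mu).

Lemma square_of_mul_defines (R : nzRingType) (mu : pef) :
  defines_mul R mu -> defines_square R (square_of_mul mu).
Proof.
move=> def_mul e; rewrite /= /is_square.
by split=> -[y sat_y]; exists y; move: sat_y; rewrite sat_rename def_mul.
Qed.

Lemma no_square_formula (C1 : nat -> Prop) :
  (forall p, C1 p -> prime p) -> (forall n : nat, exists p, (n < p)%N /\ C1 p) ->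
  ~ exists phi : pef, forall p : nat, C1 p -> defines_square 'F_p phi.
Proof.
move=> C1_pr C1_unbounded [phi def_sq].
have [p [lt_wp C1_p]] := C1_unbounded (2 * pef_width phi)%N.
exact: Fp_square_not_definable (C1_pr p C1_p) lt_wp (def_sq p C1_p).
Qed.

Theorem proposition1p5 :
  (forall C0 : seq nat, C0 != [::] -> all prime C0 ->
     exists phi : pef, forall p : nat, p \in C0 -> defines_square 'F_p phi)
  /\
  (forall C1 : nat -> Prop, (forall p, C1 p -> prime p) ->
     (forall n : nat, exists p, (n < p)%N /\ C1 p) ->
     ~ exists phi : pef, forall p : nat, C1 p -> defines_square 'F_p phi)
  /\
  ~ exists mu : pef, forall p : nat, prime p -> defines_mul 'F_p mu.
Proof.
split.
  by move=> C0 _ C0_pr; exists (square_formula C0) => p; exact: square_formula_defines.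
split; first exact: no_square_formula.
move=> [mu def_mul]; apply: (@no_square_formula prime) => //.
- by move=> n; have [p lt_np p_pr] := prime_above n; exists p.
by exists (square_of_mul mu) => p p_pr; exact/square_of_mul_defines/def_mul.
Qed.
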